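(* Let $p,q>0$ with $p+q=2k\le n$, $\epsilon,\eta\in\{0,1\}$, and let $\tau$ be special with associated integers $u,v$ and $i'_r,j'_s$. Let $x_1>\dots>x_q$ and $y_1>\dots>y_p$ be integers in $[u+v+1,n]$ with $x_i\ne y_j$ for all $i,j$, such that \[ x_i+u+q+1-i\equiv \eta\pmod 2\ (1\le i\le q),\qquad y_{p+1-m}+v+m-1\equiv\epsilon\pmod 2\ (1\le m\le p). \] Then there is exactly one tuple $(w\tau,\sigma,a,b)$ arising from a solution $(w,\sigma,a,b)$ of equation (E) such that the first $q$ coordinates of $\sigma\rho_{\mathfrak g}$ are $x_1,\dots,x_q$ and the last $p$ coordinates are $-y_p,\dots,-y_1$.
   Context: Setting: $n\ge1$, $\mathfrak g=\mathfrak{sp}(2n,\mathbb C)$, $\mathfrak k=\mathfrak{gl}(n,\mathbb C)$, compact Cartan and its dual identified with $\mathbb C^n$; positive compact roots $e_i-e_j$ ($i<j$), positive noncompact roots $e_i+e_j$ ($i<j$), $2e_i$; $\rho_{\mathfrak g}=(n,\dots,1)$, $\rho_{\mathfrak k}=(\frac{n-1}{2},\dots,-\frac{n-1}{2})$; $W$ = all signed permutations of coordinates, $W_{\mathfrak k}=S_n$; $W^1=\{\sigma\in W:\sigma\rho_{\mathfrak g}\text{ satisfies }(\sigma\rho_{\mathfrak g})_1\ge\dots\ge(\sigma\rho_{\mathfrak g})_n\}$. Let $k\ge1$, $\Lambda_k=(n-k,\dots,1,0,-1,\dots,-k+1)$. Special weights: for integers $u,v\ge0$ with $u+v=n-2k$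 and $i_1>\dots>i_u$, $j_1>\dots>j_v$ with $\{i_1,\dots,i_u\}\sqcup\{j_1,\dots,j_v\}=\{k+1,\dots,n-k\}$, put $i'_r=i_r-k$, $j'_s=j_s-k$ and let $\tau=x\Lambda_k-\rho_{\mathfrak k}$ where $x\Lambda_k=(i_1,\dots,i_u,k,k-1,\dots,-k+1,-j_v,\dots,-j_1)$; such $\tau$ are called special, with associated integers $u,v$. Equation (E): for special $\tau$, a solution of (E) is a tuple $(w,\sigma,a,b)$ with $w\in W_{\mathfrak k}$, $\sigma\in W^1$, integers $a_1\ge\dots\ge a_p\ge0$, $b_1\ge\dots\ge b_q\ge0$, such that, with $\alpha_i=\epsilon+2a_i$, $\beta_j=\eta+2b_j$, \[ w\tau+\rho_{\mathfrak k}+(\tfrac{q-p}{2},\dots,\tfrac{q-p}{2})=\sigma\rho_{\mathfrak g}+(-\beta_1,\dots,-\beta_q,0,\dots,0,\alpha_p,\dots,\alpha_1), \] the middle block having $n-p-q$ zeros. *)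

From HB Require Import structures.
From mathcomp Require Import all_boot all_order all_algebra all_fingroup.
Set Implicit Arguments. Unset Strict Implicit. Unset Printing Implicit Defensive.
Import Order.TTheory GRing.Theory Num.Theory.
Local Open Scope ring_scope.

(* Weights are vectors in Q^n, coordinates indexed 0-based by 'I_n. *)

Definition rho_g (n : nat) : {ffun 'I_n -> rat} := [ffun i : 'I_n => ((n - i)%N)%:R].

Definition rho_k (n : nat) : {ffun 'I_n -> rat} :=
  [ffun i : 'I_n => (n%:R - 1) / 2 - (i : nat)%:R].

(* x Lambda_k = (i_1,...,i_u, k, k-1, ..., -k+1, -j_v, ..., -j_1),
   with I = [:: i_1; ...; i_u] and J = [:: j_1; ...; j_v]. *)
Definition xLam (k : nat) (I J : seq nat) : seq rat :=
  [seq (i%:R : rat) | i <- I]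
  ++ [seq ((k%:R - j%:R) : rat) | j <- iota 0 (2 * k)]
  ++ rev [seq (- (j%:R) : rat) | j <- J].

Definition special (n k u v : nat) (I J : seq nat) : Prop :=
  [/\ size I = u, size J = v, (u + v = n - 2 * k)%N,
      sorted gtn I /\ sorted gtn J
    & perm_eq (I ++ J) (iota k.+1 (n - 2 * k))].

Definition tau (n k : nat) (I J : seq nat) : {ffun 'I_n -> rat} :=
  [ffun i : 'I_n => nth 0 (xLam k I J) i - rho_k n i].

Definition wact (n : nat) (w : {perm 'I_n}) (l : {ffun 'I_n -> rat}) : {ffun 'I_n -> rat} :=
  [ffun i => l (w^-1 i)%g].

(* W = signed permutations: a permutation together with a sign choice per coordinate *)
Definition signed_perm (n : nat) := ({perm 'I_n} * {ffun 'I_n -> bool})%type.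

Definition Wact (n : nat) (sg : signed_perm n) (l : {ffun 'I_n -> rat}) : {ffun 'I_n -> rat} :=
  [ffun i => (-1) ^+ (sg.2 i) * l (sg.1^-1 i)%g].

Definition inW1 (n : nat) (sg : signed_perm n) : Prop :=
  forall i j : 'I_n, (i <= j)%N -> Wact sg (rho_g n) j <= Wact sg (rho_g n) i.

Definition shiftE (n p q eps eta : nat) (a : p.-tuple nat) (b : q.-tuple nat) : seq rat :=
  [seq - (((eta + 2 * x)%N)%:R) | x <- b]
  ++ nseq (n - p - q) 0
  ++ rev [seq (((eps + 2 * x)%N)%:R) | x <- a].

Definition solE (n k p q eps eta : nat) (I J : seq nat) (w : {perm 'I_n})
    (sg : signed_perm n) (a : p.-tuple nat) (b : q.-tuple nat) : Prop :=
  [/\ inW1 sg, sorted geq a, sorted geq b &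
      forall t : 'I_n,
        wact w (tau n k I J) t + rho_k n t + (q%:R - p%:R) / 2
        = Wact sg (rho_g n) t + nth 0 (shiftE n eps eta a b) t].

Definition coordcond (n p q : nat) (X : q.-tuple nat) (Y : p.-tuple nat)
    (sg : signed_perm n) : Prop :=
  forall t : 'I_n,
    ((t < q)%N -> Wact sg (rho_g n) t = (nth 0 X t)%:R) /\
    ((n - p <= t)%N -> Wact sg (rho_g n) t = - (nth 0 Y (n - 1 - t))%:R).
Arguments coordcond : clear implicits.
Arguments solE : clear implicits.
Arguments wact : clear implicits.
Arguments Wact : clear implicits.
Arguments inW1 : clear implicits.

From HB Require Import structures.
From mathcomp Require Import all_boot all_order all_algebra all_fingroup.
From mathcomp Require Import zify ring lra.
Set Implicit Arguments. Unset Strict Implicit. Unset Printing Implicit Defensive.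
Import Order.TTheory GRing.Theory Num.Theory.

(* Coordinatewise, since rho_k is an arithmetic progression, (w tau + rho_k)_t =
   mu (w^-1 t) - t where mu s = (x Lambda_k)_s + s takes the values I_r + r, the
   constant k + u on the 2k plateau coordinates, and s - J_(...).  On the u + v
   middle coordinates the shift vector vanishes, so (E) says that sigma rho_g equals
   mu (w^-1 t) - t + (q - p)/2 there; these coordinates have distinct absolute
   values in {1, ..., u + v}, since X and Y already fill [u + v + 1, n].
   The combinatorial core is the pool embedding lemma (pool_embedding_forcedP): if
   values f j whose differences f j - j have distinct absolute values in {1, ..., m}
   exhaust, together with a remainder, the multiset pool m I J e of values of mu,
   then f and the remainder are forced.  It is proved by peeling off the largest
   absolute value m, which must come from the top element of I or of J. *)

Lemma gtn_trans : transitive gtn.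
Proof. by move=> a b c /= h1 h2; apply: ltn_trans h2 h1. Qed.

Lemma sorted_gtn_uniq (s : seq nat) : sorted gtn s -> uniq s.
Proof. by apply: sorted_uniq; [apply: gtn_trans | move=> x /=; rewrite ltnn]. Qed.

Lemma sorted_gtn_lt (s : seq nat) i j : sorted gtn s -> (i < j)%N -> (j < size s)%N ->
  (nth 0 s j < nth 0 s i)%N.
Proof.
move=> ss ij js; apply: (sorted_ltn_nth gtn_trans 0 ss); rewrite ?inE //.
exact: ltn_trans js.
Qed.

Lemma sorted_gtn_nth_le (s : seq nat) (M : nat) : sorted gtn s -> all (fun x => x <= M)%N s ->
  forall r, (r < size s)%N -> (nth 0 s r + r <= M)%N.
Proof.
elim: s M => [|x s IH] M //= Hp /andP[xM Hall] [|r] /=; first by rewrite addn0.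
rewrite ltnS => rs.
have xs : all (gtn x) s by apply: (order_path_min gtn_trans) Hp.
have Hall' : all (fun y => y <= M.-1)%N s.
  by apply/allP=> y /(allP xs) /= hy; move: xM hy; clear; lia.
have hx : (nth 0 s r < x)%N by apply: (allP xs); rewrite mem_nth.
by have := IH M.-1 (path_sorted Hp) Hall' r rs; move: hx xM; clear; lia.
Qed.

Lemma sorted_gtn_nth_ge (s : seq nat) (L : nat) : sorted gtn s -> all (fun x => L <= x)%N s ->
  forall r, (r < size s)%N -> (L + (size s - 1 - r) <= nth 0 s r)%N.
Proof.
elim: s => [|x s IH] //= Hp /andP[Lx Hall] [|r] /=; last first.
  by rewrite ltnS => rs; have := IH (path_sorted Hp) Hall r rs; clear; lia.
case: s Hp Hall IH => [|y s] /=; first by move: Lx; clear; lia.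
move=> /andP[yx Hp] Hall /(_ Hp Hall 0%N) /=; move: yx; clear; lia.
Qed.

Lemma sorted_gtn_head (s : seq nat) x : sorted gtn s -> x \in s -> (x <= head 0 s)%N.
Proof.
case: s => [|y s] //= Hp; rewrite inE => /orP[/eqP->//|xs].
by have /allP/(_ x xs) /= := order_path_min gtn_trans Hp; clear; lia.
Qed.

Lemma sorted_gtn_top (s : seq nat) M : sorted gtn s -> all (fun x => x <= M)%N s -> M \in s ->
  s = M :: behead s.
Proof.
case: s => [|x s] // ss /andP[xM _] Ms.
by have := sorted_gtn_head ss Ms => /= Mx; congr (_ :: _); apply/eqP; rewrite eqn_leq xM.
Qed.

Lemma sorted_geq_map_iota (g : nat -> nat) a n :
  (forall i, (i.+1 < a + n)%N -> (g i.+1 <= g i)%N) -> sorted geq (map g (iota a n)).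
Proof.
elim: n a => [|[|n] IH] a h //=; apply/andP; split; first by apply: h; clear; lia.
by apply: (IH a.+1) => i hi; apply: h; move: hi; clear; lia.
Qed.

Lemma iota_rcons a m : iota a m.+1 = rcons (iota a m) (a + m)%N.
Proof. by rewrite -addn1 iotaD -cats1. Qed.

Lemma map_iota_shift (T : Type) (g : nat -> T) a m :
  map g (iota a m) = map (fun j => g (a + j)%N) (iota 0 m).
Proof. by rewrite (map_comp g (addn a)) -iotaDl addn0. Qed.

Lemma map_iota_const (T : Type) (g : nat -> T) c a n :
  (forall i, (a <= i < a + n)%N -> g i = c) -> map g (iota a n) = nseq n c.
Proof.
elim: n a => [|n IH] a h //=; rewrite h; last by clear; lia.
by congr cons; apply: IH => i hi; apply: h; move: hi; clear; lia.
Qed.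

Lemma mktuple_iota (T : Type) (g : nat -> T) m : val [tuple g i | i < m] = map g (iota 0 m).
Proof. by rewrite /= -val_enum_ord -map_comp. Qed.

Local Open Scope ring_scope.

Lemma sorted_ge_cat (R : numDomainType) (s1 s2 : seq R) (c : R) : sorted >=%R s1 -> sorted >=%R s2 ->
  all (>= c) s1 -> all (<= c) s2 -> sorted >=%R (s1 ++ s2).
Proof.
rewrite !(sorted_pairwise ge_trans) pairwise_cat => p1 p2 a1 a2; rewrite p1 p2 !andbT.
by apply/allrelP => x y /(allP a1) xc /(allP a2) yc; apply: le_trans yc xc.
Qed.

Lemma sorted_gtn_ge_pos (R : numDomainType) (s : seq nat) :
  sorted gtn s -> sorted >=%R [seq x%:R : R | x <- s].
Proof.
by move=> ss; rewrite sorted_map; apply: sub_sorted ss => x y /=; rewrite ler_nat; apply: ltnW.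
Qed.

Lemma sorted_gtn_ge_neg (R : numDomainType) (s : seq nat) :
  sorted gtn s -> sorted >=%R [seq - x%:R : R | x <- rev s].
Proof.
move=> ss; rewrite sorted_map rev_sorted; apply: sub_sorted ss => x y /=.
by rewrite lerN2 ler_nat; apply: ltnW.
Qed.

(* For a split of {1, ..., m} into strictly decreasing sequences I and J,
   pool m I J e is the multiset of the numbers I_r + r, m - 1 - s - J_s, and e copies
   of size I; it will be the multiset of values of mu - k.  The values expl m I J j
   (for j < m) are the ones the peeling argument forces. *)
Definition decreasing_split m (I J : seq nat) : Prop :=
  [/\ sorted gtn I, sorted gtn J & perm_eq (I ++ J) (iota 1 m)].

Definition poolI (I : seq nat) : seq rat := [seq ((nth 0%N I r + r)%N)%:R | r <- iota 0 (size I)].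
Definition poolJ (m : nat) (J : seq nat) : seq rat :=
  [seq m%:R - (s.+1)%:R - (nth 0%N J s)%:R | s <- iota 0 (size J)].
Definition pool (m : nat) (I J : seq nat) (e : nat) : seq rat :=
  poolI I ++ poolJ m J ++ nseq e (size I)%:R.
Definition expl (m : nat) (I J : seq nat) (j : nat) : rat :=
  if (j < size I)%N then ((nth 0%N I j + j)%N)%:R else j%:R - (nth 0%N J (m - 1 - j))%:R.

Lemma mem_iota_range (I J : seq nat) m x : perm_eq (I ++ J) (iota 1 m) -> x \in I ++ J ->
  (1 <= x <= m)%N.
Proof. by move=> P; rewrite (perm_mem P) mem_iota; clear; lia. Qed.

Lemma poolI_bounds (I : seq nat) M x : sorted gtn I -> all (fun y => y <= M)%N I ->
  x \in poolI I -> 0 <= x <= M%:R.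
Proof.
move=> sI aI /mapP[r]; rewrite mem_iota add0n => /andP[_ rs] ->.
by rewrite ler0n ler_nat sorted_gtn_nth_le.
Qed.

Lemma poolJ_bounds m (J : seq nat) M x : sorted gtn J -> all (fun y => 0 < y <= M)%N J ->
  x \in poolJ m J -> m%:R - 1 - M%:R <= x <= m%:R - 1.
Proof.
move=> sJ aJ /mapP[s]; rewrite mem_iota add0n => /andP[_ ss] ->.
have /andP[J1 _] := allP aJ _ (mem_nth 0%N ss).
have JM : (nth 0%N J s + s <= M)%N.
  by apply: sorted_gtn_nth_le => //; apply: sub_all aJ => y /andP[].
rewrite -(ler_nat rat) natrD in JM; rewrite -(ler_nat rat) in J1.
by rewrite -natr1; have := ler0n rat s; move=> ?; apply/andP; split; lra.
Qed.

Section PoolBounds.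
Variables (m : nat) (I J : seq nat).
Hypothesis split : decreasing_split m.+1 I J.

Let sI : sorted gtn I. Proof. by case: split. Qed.
Let sJ : sorted gtn J. Proof. by case: split. Qed.
Let P : perm_eq (I ++ J) (iota 1 m.+1). Proof. by case: split. Qed.

Let rangeI : all (fun y => 0 < y <= m.+1)%N I.
Proof. by apply/allP=> y yI; apply: (mem_iota_range P); rewrite mem_cat yI. Qed.

Let rangeJ : all (fun y => 0 < y <= m.+1)%N J.
Proof. by apply/allP=> y yJ; apply: (mem_iota_range P); rewrite mem_cat yJ orbT. Qed.

Let sizeIJ : (size I + size J = m.+1)%N.
Proof. by rewrite -size_cat (perm_size P) size_iota. Qed.

Let below (s : seq nat) : m.+1 \notin s -> all (fun y => 0 < y <= m.+1)%N s ->
  all (fun y => 0 < y <= m)%N s.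
Proof.
move=> ms /allP a; apply/allP=> y ys; have := a y ys.
have : y != m.+1 by apply: contraNneq ms => <-.
by clear; lia.
Qed.

Let notin_both x : x \in I -> x \notin J.
Proof.
move=> xI; apply/negP=> xJ; have := perm_uniq P; rewrite iota_uniq cat_uniq.
by case/and3P=> _ /hasPn /(_ _ xJ); rewrite xI.
Qed.

Lemma pool_bounds_topI e x : m.+1 \in I -> x \in pool m.+1 I J e -> 0 <= x <= m.+1%:R.
Proof.
move=> mI; have aJ := below (notin_both mI) rangeJ.
rewrite !mem_cat => /or3P[xI|xJ|/nseqP[-> _]].
- by apply: poolI_bounds xI => //; apply: sub_all rangeI => y /andP[].
- have := poolJ_bounds sJ aJ xJ; rewrite -natr1; have := ler0n rat m.
  by move=> ? /andP[? ?]; apply/andP; split; lra.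
- by rewrite ler0n ler_nat -sizeIJ leq_addr.
Qed.

Lemma pool_bounds_topJ e x : m.+1 \in J -> x \in pool m.+1 I J e -> -1 <= x <= m%:R.
Proof.
move=> mJ; have mI : m.+1 \notin I by apply: contraL mJ; apply: notin_both.
have aI : all (fun y => y <= m)%N I by apply: sub_all (below mI rangeI) => y /andP[].
rewrite !mem_cat => /or3P[xI|xJ|/nseqP[-> _]].
- by have /andP[? ?] := poolI_bounds sI aI xI; apply/andP; split => //; lra.
- have := poolJ_bounds sJ rangeJ xJ; rewrite -natr1.
  by move=> /andP[? ?]; apply/andP; split; lra.
- have : (0 < size J)%N by case: (J) mJ.
  move=> J0; apply/andP; split; first by apply: le_trans (ler0n _ _); rewrite lerN10.
  by rewrite ler_nat; move: sizeIJ J0; clear; lia.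
Qed.

End PoolBounds.

Lemma pool_topI m I J e :
  pool m.+1 (m.+1 :: I) J e = m.+1%:R :: map (fun x => x + 1) (pool m I J e).
Proof.
rewrite /pool /poolI /poolJ /= addn0 !map_cat -!map_comp !(map_iota_shift _ 1) map_nseq /=.
congr (_ :: _ ++ _ ++ _); last by rewrite -natr1.
  by apply: eq_map => r /=; rewrite add0n add1n addnS natr1.
by apply: eq_map => s /=; rewrite -natr1; ring.
Qed.

Lemma pool_topJ m I J e :
  perm_eq (pool m.+1 I (m.+1 :: J) e) (-1 :: pool m I J e).
Proof.
rewrite /pool; have -> : poolJ m.+1 (m.+1 :: J) = -1 :: poolJ m J.
  rewrite /poolJ /= -[1%N]addn0 iotaDl -map_comp; congr (_ :: _).
    by rewrite -natr1; ring.
  by apply: eq_map => s /=; rewrite -!natr1; ring.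
by rewrite perm_catCA /= perm_cons perm_catCA.
Qed.

Lemma expl_topI m I J j :
  expl m.+1 (m.+1 :: I) J j = if j is j'.+1 then expl m I J j' + 1 else m.+1%:R.
Proof.
case: j => [|j]; first by rewrite /expl /= addn0.
rewrite /expl /= ltnS; case: ifP => _; first by rewrite addnS -natr1.
by rewrite subn1 /= -natr1 subnS [(m - 1 - j)%N]subnAC subn1 addrAC.
Qed.

Lemma expl_topJ m I J j : (size I <= m)%N -> (j <= m)%N ->
  expl m.+1 I (m.+1 :: J) j = if j == m then -1 else expl m I J j.
Proof.
move=> Im jm; rewrite /expl subn1 /=; have [->|ne] := eqVneq j m.
  by rewrite ltnNge Im subnn -natr1 /=; ring.
by case: ifP => // _; have -> : (m - j = (m - 1 - j).+1)%N by move: jm ne; clear; lia.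
Qed.

Lemma injection_hits_top m (A : nat -> nat) : (0 < m)%N ->
  (forall j, (j < m)%N -> (0 < A j <= m)%N) ->
  (forall i j, (i < m)%N -> (j < m)%N -> A i = A j -> i = j) ->
  exists2 j, (j < m)%N & A j = m.
Proof.
move=> m0 hA inj; case: (boolP (has (fun j => A j == m) (iota 0 m))).
  by move=> /hasP[j]; rewrite mem_iota => /andP[_ jm] /eqP; exists j.
move=> /hasPn noTop; exfalso.
have U : uniq (map A (iota 0 m)).
  rewrite map_inj_in_uniq ?iota_uniq // => i j.
  by rewrite !mem_iota !add0n => /andP[_ ?] /andP[_ ?]; apply: inj.
have S : {subset map A (iota 0 m) <= iota 1 m.-1}.
  move=> y /mapP[j]; rewrite mem_iota => /andP[_ jm] ->.
  have jm' : j \in iota 0 m by rewrite mem_iota.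
  have /eqP := noTop j jm'; have := hA j jm.
  by rewrite mem_iota; clear; lia.
by have := uniq_leq_size U S; rewrite size_map !size_iota; move: m0; clear; lia.
Qed.

Lemma dist_top_low (R : realDomainType) (x : R) j m : (j <= m)%N -> 0 <= x <= m.+1%:R ->
  `|x - j%:R| = m.+1%:R -> j = 0%N /\ x = m.+1%:R.
Proof.
move=> jm /andP[x0 xm]; rewrite -(ler_nat R) in jm; rewrite -natr1 in xm *.
have j0 := ler0n R j.
have [xj|xj] := lerP j%:R x.
  move=> E; have /eqP : j%:R = 0 :> R by lra.
  by rewrite pnatr_eq0 => /eqP j0'; split => //; lra.
by move=> E; lra.
Qed.

Lemma dist_top_high (R : realDomainType) (x : R) j m : (j <= m)%N -> -1 <= x <= m%:R ->
  `|x - j%:R| = m.+1%:R -> j = m /\ x = -1.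
Proof.
move=> jm /andP[x0 xm]; rewrite -(ler_nat R) in jm; rewrite -natr1.
have j0 := ler0n R j.
have [xj|xj] := lerP j%:R x.
  by move=> E; lra.
move=> E; have /eqP : j%:R = m%:R :> R by lra.
by rewrite eqr_nat => /eqP jm'; split => //; lra.
Qed.

Definition pool_embedding (m : nat) (I J : seq nat) (e : nat)
    (f : nat -> rat) (A : nat -> nat) (rest : seq rat) : Prop :=
  [/\ decreasing_split m I J,
      (forall j, (j < m)%N -> `|f j - j%:R| = (A j)%:R /\ (0 < A j <= m)%N),
      (forall i j, (i < m)%N -> (j < m)%N -> A i = A j -> i = j)
    & perm_eq (map f (iota 0 m) ++ rest) (pool m I J e)].

Definition pool_embedding_forced (m : nat) (I J : seq nat) (e : nat)
    (f : nat -> rat) (rest : seq rat) : Prop :=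
  (forall j, (j < m)%N -> f j = expl m I J j) /\ perm_eq rest (nseq e (size I)%:R).

Lemma pool_embedding_top m I J e f A rest : pool_embedding m.+1 I J e f A rest ->
  [\/ [/\ m.+1 \in I, f 0%N = m.+1%:R & A 0%N = m.+1]
    | [/\ m.+1 \in J, f m = -1 & A m = m.+1]].
Proof.
move=> [split hA inj Hp]; have [_ _ P] := split.
have [j0 j0m Aj0] := injection_hits_top (ltn0Sn m) (fun j jm => (hA j jm).2) inj.
have [abs_j0 _] := hA j0 j0m; rewrite Aj0 in abs_j0.
have fmem : f j0 \in pool m.+1 I J e.
  by rewrite -(perm_mem Hp) mem_cat map_f // mem_iota.
have : m.+1 \in I ++ J by rewrite (perm_mem P) mem_iota; clear; lia.
rewrite mem_cat => /orP[mI|mJ].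
  have [j00 fj0] := dist_top_low (j0m : (j0 <= m)%N) (pool_bounds_topI split mI fmem) abs_j0.
  by left; subst j0.
have [j0e fj0] := dist_top_high (j0m : (j0 <= m)%N) (pool_bounds_topJ split mJ fmem) abs_j0.
by right; subst j0.
Qed.

Lemma pool_embedding_stepI m I J e f A rest :
  (forall f' A' rest', pool_embedding m I J e f' A' rest' -> pool_embedding_forced m I J e f' rest') ->
  pool_embedding m.+1 (m.+1 :: I) J e f A rest -> f 0%N = m.+1%:R -> A 0%N = m.+1 ->
  pool_embedding_forced m.+1 (m.+1 :: I) J e f rest.
Proof.
move=> IH [[sI sJ P] hA inj Hp] f0 A0.
pose f' j := f j.+1 - 1; pose rest' := map (fun x => x - 1) rest.
have addK1 (s : seq rat) : map (fun x => x + 1) (map (fun x => x - 1) s) = s.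
  by rewrite -map_comp map_id_in // => x _ /=; rewrite subrK.
have emb : pool_embedding m I J e f' (fun j => A j.+1) rest'.
  split.
  - split; [exact: path_sorted sI | exact: sJ |].
    by move: P; rewrite iota_rcons add1n perm_sym perm_rcons perm_cons perm_sym.
  - move=> j jm; have [absE bd] := hA j.+1 jm.
    have ne : A j.+1 != m.+1 by apply/eqP=> E; have := inj _ _ (jm : (j.+1 < m.+1)%N) (ltn0Sn m); rewrite A0 E => /(_ erefl).
    split; last by move: bd ne; clear; lia.
    by rewrite -absE /f' -natr1; congr `|_|; ring.
  - by move=> i j im jm /(inj i.+1 j.+1 im jm) [].
  - apply: (perm_map_inj (addIr (1 : rat))); rewrite map_cat -map_comp addK1.
    rewrite -(perm_cons m.+1%:R) -pool_topI -f0.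
    have -> : map ((+%R^~ 1) \o f') (iota 0 m) = map f (iota 1 m).
      by rewrite [RHS]map_iota_shift; apply: eq_map => j; rewrite /= add1n subrK.
    exact: Hp.
have [fE restE] := IH _ _ _ emb; split.
  by case=> [|j] jm; rewrite expl_topI // -fE // /f' subrK.
by have := perm_map (fun x => x + 1) restE; rewrite map_nseq addK1 /= natr1.
Qed.

Lemma pool_embedding_stepJ m I J e f A rest :
  (forall f' A' rest', pool_embedding m I J e f' A' rest' -> pool_embedding_forced m I J e f' rest') ->
  pool_embedding m.+1 I (m.+1 :: J) e f A rest -> f m = -1 -> A m = m.+1 ->
  pool_embedding_forced m.+1 I (m.+1 :: J) e f rest.
Proof.
move=> IH [[sI sJ P] hA inj Hp] fm Am.
have emb : pool_embedding m I J e f A rest.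
  split.
  - split; [exact: sI | exact: path_sorted sJ |].
    by move: P; rewrite iota_rcons add1n perm_sym perm_rcons perm_sym -[m.+1 :: J]cat1s perm_catCA /= perm_cons.
  - move=> j jm; have [absE bd] := hA j (ltnW jm).
    have ne : A j != m.+1.
      by apply/eqP=> E; have := inj _ _ (ltnW jm) (ltnSn m); rewrite Am E => /(_ erefl) /eqP; rewrite ltn_eqF.
    by split; last by move: bd ne; clear; lia.
  - by move=> i j im jm; apply: inj; apply: ltnW.
  - have := perm_trans Hp (pool_topJ m I J e).
    by rewrite iota_rcons map_rcons -cats1 -catA perm_catCA /= fm perm_cons.
have [fE restE] := IH _ _ _ emb; split => // j jm.
have sizeI : (size I <= m)%N.
  by have := perm_size P; rewrite size_cat size_iota /=; clear; lia.
by rewrite expl_topJ //; case: eqVneq => [->|ne] //; apply: fE; move: jm ne; clear; lia.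
Qed.

Lemma pool_embedding_forcedP m I J e f A rest :
  pool_embedding m I J e f A rest -> pool_embedding_forced m I J e f rest.
Proof.
elim: m I J f A rest => [|m IH] I J f A rest emb.
  have [[_ _ P] _ _ Hp] := emb.
  have := perm_size P; rewrite size_cat /= => /eqP; rewrite addn_eq0.
  by case/andP=> /nilP I0 /nilP J0; move: Hp; rewrite I0 J0.
have [[sI sJ P] _ _ _] := emb.
have bounded x : x \in I ++ J -> (x <= m.+1)%N by move/(mem_iota_range P)/andP=> [].
have IH' I' J' : forall f' A' rest', pool_embedding m I' J' e f' A' rest' ->
  pool_embedding_forced m I' J' e f' rest' by move=> f' A' rest'; apply: IH.
case: (pool_embedding_top emb) => [[mI f0 A0]|[mJ fm Am]].
  have aI : all (fun x => x <= m.+1)%N I by apply/allP=> x xI; rewrite bounded // mem_cat xI.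
  move: emb; rewrite (sorted_gtn_top sI aI mI) => emb.
  exact: pool_embedding_stepI (IH' _ _) emb f0 A0.
have aJ : all (fun x => x <= m.+1)%N J by apply/allP=> x xJ; rewrite bounded // mem_cat xJ orbT.
move: emb; rewrite (sorted_gtn_top sJ aJ mJ) => emb.
exact: pool_embedding_stepJ (IH' _ _) emb fm Am.
Qed.

Lemma Wact_rho n (sg : signed_perm n) t :
  Wact n sg (rho_g n) t = (-1) ^+ sg.2 t * ((n - (sg.1^-1)%g t)%N)%:R.
Proof. by rewrite /Wact /rho_g !ffunE. Qed.

Lemma signed_nat_inj (R : numDomainType) (b1 b2 : bool) (x1 x2 : nat) :
  (0 < x1)%N -> (0 < x2)%N -> (-1) ^+ b1 * x1%:R = (-1) ^+ b2 * x2%:R :> R -> b1 = b2 /\ x1 = x2.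
Proof.
rewrite -!(ltr0n R) => x1p x2p E.
have x12 : x1 = x2.
  move/(congr1 Num.norm): E; rewrite !normrM !normrX normrN1 !expr1n !mul1r !normr_nat.
  by move/eqP; rewrite eqr_nat => /eqP.
split=> //; move: E; rewrite -x12 => /mulIf; rewrite gt_eqF // => /(_ isT).
have N11 : (-1 : R) != 1 by rewrite lt_eqF // (lt_trans (ltrN10 R)) ?ltr01.
by case: b1; case: b2; rewrite ?expr1 ?expr0 // => /eqP; rewrite ?(negbTE N11) // eq_sym (negbTE N11).
Qed.

Lemma Wact_rho_inj n (sg1 sg2 : signed_perm n) :
  (forall t, Wact n sg1 (rho_g n) t = Wact n sg2 (rho_g n) t) -> sg1 = sg2.
Proof.
case: sg1 sg2 => [p1 e1] [p2 e2] /= E.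
have same t : e1 t = e2 t /\ (p1^-1)%g t = (p2^-1)%g t.
  have := E t; rewrite !Wact_rho /= => /signed_nat_inj.
  rewrite !subn_gt0 !ltn_ord => /(_ isT isT) [-> N]; split => //; apply: ord_inj.
  by move: N; have := ltn_ord ((p1^-1)%g t); have := ltn_ord ((p2^-1)%g t); clear; lia.
by congr (_, _); [apply: invg_inj; apply/permP | apply/ffunP] => t; have [] := same t.
Qed.

Lemma norm_Wact_rho n (sg : signed_perm n) t :
  `|Wact n sg (rho_g n) t| = ((n - (sg.1^-1)%g t)%N)%:R.
Proof. by rewrite Wact_rho normrM normrX normrN1 expr1n mul1r normr_nat. Qed.

Lemma abs_Wact_rho_inj n (sg : signed_perm n) t1 t2 :
  (n - (sg.1^-1)%g t1)%N = (n - (sg.1^-1)%g t2)%N -> t1 = t2.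
Proof.
move=> E; apply: (perm_inj (s := (sg.1^-1)%g)); apply: ord_inj.
by move: E; have := ltn_ord ((sg.1^-1)%g t1); have := ltn_ord ((sg.1^-1)%g t2); clear; lia.
Qed.

Lemma norm_Wact_rho_inj n (sg : signed_perm n) t1 t2 :
  `|Wact n sg (rho_g n) t1| = `|Wact n sg (rho_g n) t2| -> t1 = t2.
Proof. by rewrite !norm_Wact_rho => /eqP; rewrite eqr_nat => /eqP /abs_Wact_rho_inj. Qed.

Lemma perm_map_enum n (w : {perm 'I_n}) : perm_eq (map w (enum 'I_n)) (enum 'I_n).
Proof.
apply: uniq_perm; first by rewrite map_inj_uniq ?enum_uniq //; apply: perm_inj.
  by apply: enum_uniq.
move=> x; rewrite mem_enum; apply/mapP; exists ((w^-1)%g x); first by rewrite mem_enum.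
by rewrite permKV.
Qed.

(* The coordinates of x Lambda_k shifted by (0, 1, 2, ...): mu s = (x Lambda_k)_s + s.
   Since rho_k is an arithmetic progression, (w tau + rho_k)_t = mu (w^-1 t) - t. *)
Definition mu (k : nat) (I J : seq nat) (s : nat) : rat := nth 0 (xLam k I J) s + s%:R.

Lemma wact_tau n k I J (w : {perm 'I_n}) (t : 'I_n) :
  wact n w (tau n k I J) t + rho_k n t = mu k I J ((w^-1)%g t) - (t : nat)%:R.
Proof. by rewrite /wact /tau /rho_k /mu !ffunE; ring. Qed.

Lemma muI k I J s : (s < size I)%N -> mu k I J s = ((nth 0%N I s + s)%N)%:R.
Proof. by move=> h; rewrite /mu /xLam nth_cat size_map h (nth_map 0%N) // natrD. Qed.

Lemma muM k I J s : (size I <= s < size I + 2 * k)%N -> mu k I J s = ((k + size I)%N)%:R.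
Proof.
move=> /andP[h1 h2]; rewrite /mu /xLam nth_cat size_map ltnNge h1 /= nth_cat size_map size_iota.
have -> : (s - size I < 2 * k)%N by move: h1 h2; clear; lia.
rewrite (nth_map 0%N) ?nth_iota ?size_iota; try (move: h1 h2; clear; lia).
by rewrite add0n natrB // natrD; ring.
Qed.

Lemma muJ k I J s : (size I + 2 * k <= s < size I + 2 * k + size J)%N ->
  mu k I J s = s%:R - (nth 0%N J (size I + 2 * k + size J - 1 - s))%:R.
Proof.
move=> /andP[h1 h2]; rewrite /mu /xLam nth_cat size_map.
have -> : (s < size I)%N = false by move: h1; clear; lia.
rewrite nth_cat size_map size_iota.
have -> : (s - size I < 2 * k)%N = false by move: h1; clear; lia.
rewrite nth_rev size_map ?(nth_map 0%N); try (move: h1 h2; clear; lia).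
have -> : (size J - (s - size I - 2 * k).+1 = size I + 2 * k + size J - 1 - s)%N
  by move: h1 h2; clear; lia.
by ring.
Qed.

Lemma pool_mu k I J :
  all (fun x => k < x)%N (I ++ J) ->
  perm_eq (map (fun s => mu k I J s - k%:R) (iota 0 (size I + 2 * k + size J)))
          (pool (size I + size J) (map (subn^~ k) I) (map (subn^~ k) J) (2 * k)).
Proof.
move=> al; set I' := map (subn^~ k) I; set J' := map (subn^~ k) J.
have kI i : (i < size I)%N -> (k <= nth 0%N I i)%N.
  by move=> hi; apply: ltnW; apply: (allP al); rewrite mem_cat mem_nth.
have kJ i : (i < size J)%N -> (k <= nth 0%N J i)%N.
  by move=> hi; apply: ltnW; apply: (allP al); rewrite mem_cat mem_nth ?orbT.
have sI' : size I' = size I by rewrite size_map.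
have sJ' : size J' = size J by rewrite size_map.
have segI : map (fun s => mu k I J s - k%:R) (iota 0 (size I)) = poolI I'.
  rewrite /poolI sI'; apply/eq_in_map => s; rewrite mem_iota add0n => /andP[_ hs].
  by rewrite muI // /I' (nth_map 0%N) // !natrD natrB ?kI //; ring.
have segM : map (fun s => mu k I J s - k%:R) (iota (0 + size I) (2 * k)) = nseq (2 * k) (size I')%:R.
  apply: map_iota_const => i hi; rewrite muM; last by move: hi; clear; lia.
  by rewrite sI' natrD; ring.
have segJ : map (fun s => mu k I J s - k%:R) (iota (0 + (size I + 2 * k)) (size J)) =
            rev (poolJ (size I + size J) J').
  apply: (@eq_from_nth _ 0); first by rewrite size_rev !size_map !size_iota.
  move=> i; rewrite size_map size_iota => hi.
  rewrite nth_rev ?size_map ?size_iota ?sJ' // (nth_map 0%N) ?size_iota // nth_iota //.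
  rewrite muJ; last by move: hi; clear; lia.
  rewrite /poolJ sJ' (nth_map 0%N) ?size_iota ?nth_iota; try (move: hi; clear; lia).
  rewrite add0n /J' (nth_map 0%N); last by move: hi; clear; lia.
  have -> : (size I + 2 * k + size J - 1 - (0 + (size I + 2 * k) + i) = size J - i.+1)%N
    by move: hi; clear; lia.
  rewrite (natrB _ (kJ _ _)); last by move: hi; clear; lia.
  have -> : (size J - i.+1).+1 = (size J - i)%N by move: hi; clear; lia.
  by rewrite !natrD natrB; [ring | move: hi; clear; lia].
rewrite iotaD iotaD !map_cat segI segM segJ /pool -catA.
by rewrite perm_cat2l perm_catC perm_cat2r perm_rev.
Qed.

Lemma shiftE_nth n p q eps eta (a : p.-tuple nat) (b : q.-tuple nat) t :
  (p + q <= n)%N -> (t < n)%N ->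
  nth 0 (shiftE n eps eta a b) t =
   if (t < q)%N then - ((eta + 2 * nth 0%N b t)%N)%:R
   else if (t < n - p)%N then 0 else ((eps + 2 * nth 0%N a (n - 1 - t))%N)%:R.
Proof.
move=> pqn tn; rewrite /shiftE nth_cat size_map size_tuple.
case: ifP => tq; first by rewrite (nth_map 0%N) ?size_tuple.
rewrite nth_cat size_nseq; case: ifP => h1.
  have -> : (t < n - p)%N by move: h1 tq pqn; clear; lia.
  by rewrite nth_nseq h1.
have -> : (t < n - p)%N = false by move: h1 tq pqn; clear; lia.
rewrite nth_rev size_map size_tuple ?(nth_map 0%N) ?size_tuple; try (move: h1 tq pqn tn; clear; lia).
by have -> : (p - (t - q - (n - p - q)).+1 = n - 1 - t)%N by move: h1 tq pqn tn; clear; lia.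
Qed.

Definition on_nat (T : Type) n (x0 : T) (F : 'I_n -> T) (t : nat) : T := oapp F x0 (insub t).

Lemma on_natE (T : Type) n (x0 : T) (F : 'I_n -> T) (i : 'I_n) : on_nat x0 F i = F i.
Proof. by rewrite /on_nat valK. Qed.

Lemma map_on_nat (T : Type) n (x0 : T) (F : 'I_n -> T) :
  map (on_nat x0 F) (iota 0 n) = map F (enum 'I_n).
Proof. by rewrite -val_enum_ord -map_comp; apply: eq_map => i /=; rewrite on_natE. Qed.

Section SpecialTau.
Variables (n k p q u v eps eta : nat) (I J : seq nat) (X : q.-tuple nat) (Y : p.-tuple nat).
Hypotheses (pq2k : (p + q = 2 * k)%N) (k_le : (2 * k <= n)%N).
Hypotheses (sizeI : size I = u) (sizeJ : size J = v) (uv_eq : (u + v = n - 2 * k)%N)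
  (sortI : sorted gtn I) (sortJ : sorted gtn J)
  (permIJ : perm_eq (I ++ J) (iota k.+1 (n - 2 * k))).
Hypotheses (sortX : sorted gtn X) (sortY : sorted gtn Y)
  (rangeX : forall i, (i < q)%N -> (u + v + 1 <= nth 0 X i <= n)%N)
  (rangeY : forall j, (j < p)%N -> (u + v + 1 <= nth 0 Y j <= n)%N)
  (X_Y : forall i j, (i < q)%N -> (j < p)%N -> nth 0%N X i <> nth 0%N Y j).
Hypotheses (eps_le1 : (eps <= 1)%N) (eta_le1 : (eta <= 1)%N)
  (parX : forall i, (1 <= i <= q)%N -> ((nth 0 X (i - 1) + u + q + 1 - i) %% 2 = eta)%N)
  (parY : forall m, (1 <= m <= p)%N -> ((nth 0 Y (p - m) + v + m - 1) %% 2 = eps)%N).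

Lemma n_split : n = (q + (u + v) + p)%N.
Proof. by move: uv_eq pq2k k_le; clear; lia. Qed.

Definition Ish : seq nat := map (subn^~ k) I.
Definition Jsh : seq nat := map (subn^~ k) J.

Lemma IJ_gt_k : all (fun x => k < x)%N (I ++ J).
Proof. by apply/allP=> x; rewrite (perm_mem permIJ) mem_iota; clear; lia. Qed.

Lemma I_J_gt_k : all (fun x => k < x)%N I /\ all (fun x => k < x)%N J.
Proof. by apply/andP; rewrite -all_cat IJ_gt_k. Qed.

Lemma size_Ish : size Ish = u. Proof. by rewrite size_map. Qed.
Lemma size_Jsh : size Jsh = v. Proof. by rewrite size_map. Qed.

Lemma shifted_split : decreasing_split (u + v) Ish Jsh.
Proof.
have sorted_sh s : all (fun x => k < x)%N s -> sorted gtn s -> sorted gtn (map (subn^~ k) s).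
  move=> al ss; rewrite sorted_map; apply: sub_in_sorted al ss => x y /=.
  by clear; lia.
have [aI aJ] := I_J_gt_k.
split; [exact: sorted_sh | exact: sorted_sh |].
have -> : iota 1 (u + v) = map (subn^~ k) (iota k.+1 (n - 2 * k)).
  by rewrite -(addn1 k) iotaDl -map_comp -uv_eq map_id_in // => x _ /=; rewrite addKn.
by rewrite -map_cat perm_map.
Qed.

Lemma natr_sub_k (s : seq nat) i : all (fun x => k < x)%N s -> (i < size s)%N ->
  ((nth 0 (map (subn^~ k) s) i)%:R : rat) = (nth 0 s i)%:R - k%:R.
Proof.
move=> al si; rewrite (nth_map 0%N) // natrB //.
by apply: ltnW; apply: (allP al); rewrite mem_nth.
Qed.

(* The coordinates of mu, up to the shift by k, reproduce the values expl of
   the pool embedding; the plateau of x Lambda_k is skipped. *)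
Lemma mu_expl j : (j < u + v)%N ->
  mu k I J (if (j < u)%N then j else j + 2 * k)%N - k%:R = expl (u + v) Ish Jsh j.
Proof.
have [aI aJ] := I_J_gt_k.
move=> juv; rewrite /expl size_Ish; case: ifP => ju.
  by rewrite muI ?sizeI // !natrD /Ish (natr_sub_k aI) ?sizeI //; ring.
rewrite muJ ?sizeI ?sizeJ; last by move: ju juv; clear; lia.
rewrite /Jsh (natr_sub_k aJ) ?sizeJ; last by move: ju juv; clear; lia.
have -> : (u + 2 * k + v - 1 - (j + 2 * k) = u + v - 1 - j)%N by move: ju juv; clear; lia.
by rewrite natrD natrM; ring.
Qed.

Lemma uniq_XY : uniq (X ++ Y).
Proof.
rewrite cat_uniq !sorted_gtn_uniq //= andbT; apply/hasPn => y /(nthP 0%N)[j].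
rewrite size_tuple => hj <-; apply/negP => /(nthP 0%N)[i].
by rewrite size_tuple => hi E; apply: (X_Y hi hj E).
Qed.

Lemma mem_XY x : (x \in X ++ Y) = (u + v + 1 <= x <= n)%N.
Proof.
have inXY y : y \in X ++ Y -> (u + v + 1 <= y <= n)%N.
  rewrite mem_cat => /orP[] /(nthP 0%N)[i]; rewrite size_tuple => hi <-.
    exact: rangeX.
  exact: rangeY.
have sub : {subset X ++ Y <= iota (u + v + 1) (2 * k)}.
  by move=> y /inXY; rewrite mem_iota; have := n_split; clear -pq2k; lia.
have szle : (size (iota (u + v + 1) (2 * k)) <= size (X ++ Y))%N.
  by rewrite size_iota size_cat !size_tuple addnC pq2k.
have [_ ->] := uniq_min_size uniq_XY sub szle.
by rewrite mem_iota; have := n_split; clear -pq2k; lia.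
Qed.

(* The solution's sigma rho_g: X, then I - k, then -(J - k) and -Y in increasing order
   of absolute value; target_abs lists the absolute values. *)
Definition target_pos : seq nat := X ++ Ish.
Definition target_neg : seq nat := rev Jsh ++ rev Y.
Definition target_abs : seq nat := target_pos ++ target_neg.
Definition target : seq rat := [seq x%:R | x <- target_pos] ++ [seq - x%:R | x <- target_neg].

Lemma size_target_pos : size target_pos = (q + u)%N.
Proof. by rewrite size_cat size_tuple size_Ish. Qed.

Lemma size_target_abs : size target_abs = n.
Proof.
by rewrite !size_cat !size_rev size_tuple size_Ish size_Jsh size_tuple n_split; clear; lia.
Qed.

Lemma nth_target t :
  nth 0 target t = (-1) ^+ (q + u <= t)%N * (nth 0%N target_abs t)%:R.
Proof.
rewrite /target nth_cat size_map size_target_pos /target_abs nth_cat size_target_pos.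
case: (ltnP t (q + u)) => tqu; first by rewrite expr0 mul1r (nth_map 0%N) ?size_target_pos.
rewrite expr1 mulN1r; have [tn|tn] := ltnP (t - (q + u)) (size target_neg).
  by rewrite (nth_map 0%N).
by rewrite !nth_default ?size_map // oppr0.
Qed.

Lemma target_X t : (t < q)%N -> nth 0 target t = (nth 0%N X t)%:R.
Proof.
move=> tq; rewrite /target nth_cat size_map size_target_pos ifT; last by move: tq; clear; lia.
by rewrite (nth_map 0%N) ?size_target_pos ?nth_cat ?size_tuple ?tq //; move: tq; clear; lia.
Qed.

Lemma target_Y t : (n - p <= t < n)%N -> nth 0 target t = - (nth 0%N Y (n - 1 - t))%:R.
Proof.
have nE := n_split; move=> tb.
rewrite /target nth_cat size_map size_target_pos ifF; last by move: tb nE; clear; lia.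
rewrite (nth_map 0%N); last by rewrite /target_neg size_cat !size_rev size_Jsh size_tuple; move: tb nE; clear; lia.
rewrite /target_neg nth_cat size_rev size_Jsh ifF; last by move: tb nE; clear; lia.
rewrite nth_rev size_tuple; last by move: tb nE; clear; lia.
by congr (- (nth _ _ _)%:R); move: tb nE; clear; lia.
Qed.

Lemma target_mid j : (j < u + v)%N -> nth 0 target (q + j) = expl (u + v) Ish Jsh j - j%:R.
Proof.
move=> juv; rewrite /target /expl nth_cat size_map size_target_pos ltn_add2l size_Ish.
case: ifP => ju.
  rewrite (nth_map 0%N) ?size_target_pos ?ltn_add2l // nth_cat size_tuple ifF; last by clear; lia.
  by rewrite addKn natrD addrK.
rewrite (nth_map 0%N); last by rewrite /target_neg size_cat !size_rev size_Jsh; move: ju juv; clear; lia.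
rewrite /target_neg nth_cat size_rev size_Jsh ifT; last by move: ju juv; clear; lia.
rewrite nth_rev size_Jsh; last by move: ju juv; clear; lia.
have -> : (v - (q + j - (q + u)).+1 = u + v - 1 - j)%N by move: ju juv; clear; lia.
by rewrite addrAC subrr add0r.
Qed.

Lemma perm_target_abs : perm_eq target_abs ((X ++ Y) ++ (Ish ++ Jsh)).
Proof.
by apply/seq.permP => a; rewrite /target_abs /target_pos /target_neg !count_cat !count_rev; clear; lia.
Qed.

Lemma mem_IJsh x : x \in Ish ++ Jsh -> (1 <= x <= u + v)%N.
Proof. by have [_ _ P] := shifted_split; apply: mem_iota_range. Qed.

Lemma uniq_target_abs : uniq target_abs.
Proof.
have [_ _ P] := shifted_split.
rewrite (perm_uniq perm_target_abs) cat_uniq uniq_XY (perm_uniq P) iota_uniq /= andbT.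
by apply/hasPn => x /mem_IJsh x_uv; rewrite mem_XY; move: x_uv; clear; lia.
Qed.

Lemma target_abs_range t : (t < n)%N -> (1 <= nth 0%N target_abs t <= n)%N.
Proof.
move=> tn; have := @mem_nth _ 0%N target_abs t; rewrite size_target_abs => /(_ tn).
rewrite (perm_mem perm_target_abs) mem_cat mem_XY => /orP[|/mem_IJsh];
  set x := nth _ target_abs t; have := n_split; clear; lia.
Qed.

(* The signed permutation realising target: it sends coordinate t to the position
   n - |target_t| of rho_g, with a minus sign on the last p + v coordinates. *)
Definition sigma_abs (t : 'I_n) : 'I_n := insubd t (n - nth 0%N target_abs t)%N.

Lemma val_sigma_abs t : val (sigma_abs t) = (n - nth 0%N target_abs t)%N.
Proof.
rewrite val_insubd ifT //; have := target_abs_range (ltn_ord t).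
by set x := nth _ target_abs t; have := ltn_ord t; clear; lia.
Qed.

Lemma sigma_abs_inj : injective sigma_abs.
Proof.
move=> t1 t2 /(congr1 val); rewrite !val_sigma_abs => E; apply: ord_inj; apply/eqP.
rewrite -(nth_uniq 0%N _ _ uniq_target_abs) ?size_target_abs //; apply/eqP.
have := target_abs_range (ltn_ord t1); have := target_abs_range (ltn_ord t2).
by move: E; set x1 := nth _ target_abs t1; set x2 := nth _ target_abs t2; clear; lia.
Qed.

Definition sig_star : signed_perm n :=
  (((perm sigma_abs_inj)^-1)%g, [ffun t : 'I_n => (q + u <= t)%N]).

Lemma Wact_sig_star t : Wact n sig_star (rho_g n) t = nth 0 target t.
Proof.
rewrite Wact_rho /= invgK permE ffunE val_sigma_abs nth_target subKn //.
by have := target_abs_range (ltn_ord t); set x := nth _ target_abs t; clear; lia.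
Qed.

(* target is nonincreasing, since the four blocks are separated by the thresholds
   u + v + 1, 0 and -(u + v); hence sig_star lies in W^1. *)
Lemma sorted_target : sorted >=%R target.
Proof.
have [sIsh sJsh _] := shifted_split.
have XYb x : x \in X ++ Y -> (u + v + 1)%N%:R <= (x%:R : rat).
  by rewrite mem_XY => /andP[h _]; rewrite ler_nat.
have IJb x : x \in Ish ++ Jsh -> 1 <= (x%:R : rat) <= (u + v)%N%:R.
  by move=> /mem_IJsh /andP[h1 h2]; rewrite ler1n ler_nat h1 h2.
rewrite /target /target_pos /target_neg !map_cat -!catA.
apply: (@sorted_ge_cat _ _ _ (u + v + 1)%N%:R).
- exact: sorted_gtn_ge_pos.
- apply: (@sorted_ge_cat _ _ _ 0); first exact: sorted_gtn_ge_pos.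
  + apply: (@sorted_ge_cat _ _ _ (- (u + v)%N%:R)); try exact: sorted_gtn_ge_neg.
    * apply/allP=> y /mapP[x]; rewrite mem_rev => xJ -> /=; rewrite lerN2.
      have xIJ : x \in Ish ++ Jsh by rewrite mem_cat xJ orbT.
      by have /andP[] := IJb x xIJ.
    * apply/allP=> y /mapP[x]; rewrite mem_rev => xY -> /=; rewrite lerN2.
      have xXY : x \in X ++ Y by rewrite mem_cat xY orbT.
      by apply: le_trans (XYb x xXY); rewrite ler_nat addn1.
  + apply/allP=> y /mapP[x xI ->]; have xIJ : x \in Ish ++ Jsh by rewrite mem_cat xI.
    by have /andP[+ _] := IJb x xIJ; apply: le_trans.
  + by rewrite -map_cat; apply/allP=> y /mapP[x _ ->]; rewrite /= oppr_le0.
- by apply/allP=> y /mapP[x xX ->]; apply: XYb; rewrite mem_cat xX.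
- have neg_le s : all (<= (u + v + 1)%N%:R) [seq - x%:R : rat | x <- s].
    by apply/allP=> y /mapP[x _ ->] /=; apply: le_trans (ler0n _ _); rewrite oppr_le0.
  rewrite !all_cat !neg_le !andbT; apply/allP=> y /mapP[x xI ->] /=.
  have xIJ : x \in Ish ++ Jsh by rewrite mem_cat xI.
  by have /andP[_ h] := IJb x xIJ; apply: le_trans h _; rewrite ler_nat addn1.
Qed.

Lemma size_target : size target = n.
Proof. by rewrite size_cat !size_map -size_cat size_target_abs. Qed.

Lemma inW1_sig_star : inW1 n sig_star.
Proof.
move=> i j ij; rewrite !Wact_sig_star.
by apply: (sorted_leq_nth ge_trans (fun x => lexx x) 0 sorted_target); rewrite ?inE ?size_target.
Qed.

(* The Weyl group element: coordinate t of w tau picks the entry w_pos t of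
   x Lambda_k; the outer coordinates pick the plateau k, ..., -k+1. *)
Definition w_pos (t : nat) : nat :=
  if (t < q)%N then (u + t)%N
  else if (t < q + (u + v))%N then (if (t - q < u)%N then t - q else t - q + 2 * k)%N
  else (t - (q + (u + v)) + u + q)%N.

Lemma w_pos_lt t : (t < n)%N -> (w_pos t < n)%N.
Proof. by rewrite /w_pos; have := n_split; do !case: ifP; clear -pq2k; lia. Qed.

Lemma w_pos_inj t1 t2 : (t1 < n)%N -> (t2 < n)%N -> w_pos t1 = w_pos t2 -> t1 = t2.
Proof. by rewrite /w_pos; have := n_split; do !case: ifP; clear -pq2k; lia. Qed.

Definition w_ord (t : 'I_n) : 'I_n := insubd t (w_pos t).

Lemma val_w_ord t : val (w_ord t) = w_pos t.
Proof. by rewrite val_insubd w_pos_lt. Qed.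

Lemma w_ord_inj : injective w_ord.
Proof.
move=> t1 t2 /(congr1 val); rewrite !val_w_ord => /w_pos_inj E.
by apply: ord_inj; apply: E.
Qed.

Definition w_star : {perm 'I_n} := ((perm w_ord_inj)^-1)%g.

Lemma shift_const : (q%:R - p%:R) / 2 = q%:R - k%:R :> rat.
Proof. by have := congr1 (fun m => m%:R : rat) pq2k; rewrite /= natrD natrM; lra. Qed.

Definition lhs_target (t : nat) : rat :=
  if (q <= t < q + (u + v))%N then nth 0 target t else (u + q)%N%:R - t%:R.

(* The left-hand side of (E) for w_star: the middle coordinates are target (by
   mu_expl), the outer ones u + q - t (from the plateau). *)
Lemma wact_w_star t :
  wact n w_star (tau n k I J) t + rho_k n t + (q%:R - p%:R) / 2 = lhs_target t.
Proof.
rewrite wact_tau /w_star invgK permE val_w_ord shift_const /lhs_target /w_pos.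
have nE := n_split; have tn := ltn_ord t.
case: (ltnP t q) => [tq|qt] /=.
  by rewrite muM ?sizeI; [rewrite !natrD; ring | move: tq pq2k; clear; lia].
case: (ltnP t (q + (u + v))) => [tm|mt] /=.
  have jb : (t - q < u + v)%N by move: qt tm; clear; lia.
  rewrite -[in RHS](subnKC qt) (target_mid jb) -(mu_expl jb) natrB //; ring.
by rewrite muM ?sizeI; [rewrite !natrD; ring | move: mt tn nE pq2k; clear; lia].
Qed.

Lemma X_low : all (fun x => u + v + 1 <= x)%N X.
Proof. by apply/allP=> x /(nthP 0%N)[i]; rewrite size_tuple => iq <-; case/andP: (rangeX iq). Qed.

Lemma Y_low : all (fun y => u + v + 1 <= y)%N Y.
Proof. by apply/allP=> y /(nthP 0%N)[j]; rewrite size_tuple => jp <-; case/andP: (rangeY jp). Qed.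

(* The integers b and a of the solution, read off from X and Y; the parity
   conditions make the divisions by 2 exact. *)
Definition b_val (t : nat) : nat := ((nth 0 X t + t - (u + q) - eta) %/ 2)%N.
Definition a_val (i : nat) : nat := ((nth 0 Y i + i + 1 - (v + p) - eps) %/ 2)%N.

Lemma b_val_spec t : (t < q)%N ->
  ((eta + 2 * b_val t)%N)%:R = (nth 0%N X t)%:R + t%:R - (u + q)%N%:R :> rat.
Proof.
move=> tq; have := sorted_gtn_nth_ge sortX X_low; rewrite size_tuple => /(_ t tq) Xt.
have := @parX t.+1 tq; rewrite subn1 /= => par.
have -> : (eta + 2 * b_val t = nth 0 X t + t - (u + q))%N.
  by rewrite /b_val; move: Xt par eta_le1 tq; set x := nth _ X t; clear; lia.
by rewrite natrB ?natrD //; move: Xt tq; set x := nth _ X t; clear; lia.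
Qed.

Lemma a_val_spec i : (i < p)%N ->
  ((eps + 2 * a_val i)%N)%:R = (nth 0%N Y i)%:R + i%:R + 1 - (v + p)%N%:R :> rat.
Proof.
move=> ip; have := sorted_gtn_nth_ge sortY Y_low; rewrite size_tuple => /(_ i ip) Yi.
have pi : (1 <= p - i <= p)%N by move: ip; clear; lia.
have := parY pi; rewrite subKn; last exact: ltnW.
move=> par.
have -> : (eps + 2 * a_val i = nth 0 Y i + i + 1 - (v + p))%N.
  by rewrite /a_val; move: Yi par eps_le1 ip; set y := nth _ Y i; clear; lia.
by rewrite natrB ?natrD //; move: Yi ip; set y := nth _ Y i; clear; lia.
Qed.

Definition b_star : q.-tuple nat := [tuple b_val i | i < q].
Definition a_star : p.-tuple nat := [tuple a_val i | i < p].

Lemma nth_b_star t : (t < q)%N -> nth 0%N b_star t = b_val t.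
Proof. by move=> tq; rewrite mktuple_iota (nth_map 0%N) ?size_iota ?nth_iota. Qed.

Lemma nth_a_star i : (i < p)%N -> nth 0%N a_star i = a_val i.
Proof. by move=> ip; rewrite mktuple_iota (nth_map 0%N) ?size_iota ?nth_iota. Qed.

Lemma lhs_target_shift t : (t < n)%N ->
  lhs_target t = nth 0 target t + nth 0 (shiftE n eps eta a_star b_star) t.
Proof.
have nE := n_split; move=> tn.
rewrite /lhs_target shiftE_nth //; last by move: nE; clear; lia.
case: (ltnP t q) => [tq|qt] /=.
  by rewrite nth_b_star // b_val_spec // target_X // natrD; ring.
case: (ltnP t (n - p)) => [tm|mt].
  by rewrite ifT ?addr0 //; move: tm nE; clear; lia.
rewrite ifF; last by move: mt nE; clear; lia.
rewrite nth_a_star; last by move: mt tn nE; clear; lia.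
rewrite a_val_spec; last by move: mt tn nE; clear; lia.
rewrite target_Y; last by move: mt tn nE; clear; lia.
have : ((n - 1 - t) + t + 1)%N = n by move: tn; clear; lia.
by move/(congr1 (fun m => m%:R : rat)); rewrite nE !natrD => /= E; lra.
Qed.

Lemma solution_exists :
  solE n k p q eps eta I J w_star sig_star a_star b_star /\ coordcond n p q X Y sig_star.
Proof.
have nE := n_split; split; last first.
  move=> t; rewrite Wact_sig_star; split=> tb; first exact: target_X.
  by apply: target_Y; rewrite tb ltn_ord.
split.
- exact: inW1_sig_star.
- rewrite mktuple_iota; apply: sorted_geq_map_iota => i ip; rewrite /a_val.
  have := sorted_gtn_lt sortY (ltnSn i); rewrite size_tuple => /(_ ip).
  by set y1 := nth _ Y i.+1; set y0 := nth _ Y i; clear; lia.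
- rewrite mktuple_iota; apply: sorted_geq_map_iota => i iq; rewrite /b_val.
  have := sorted_gtn_lt sortX (ltnSn i); rewrite size_tuple => /(_ iq).
  by set x1 := nth _ X i.+1; set x0 := nth _ X i; clear; lia.
- by move=> t; rewrite wact_w_star Wact_sig_star lhs_target_shift.
Qed.

Section Uniqueness.
Variables (w : {perm 'I_n}) (sg : signed_perm n) (a : p.-tuple nat) (b : q.-tuple nat).
Hypotheses (sol : solE n k p q eps eta I J w sg a b) (coord : coordcond n p q X Y sg).

Let lhs (t : 'I_n) : rat := wact n w (tau n k I J) t + rho_k n t + (q%:R - p%:R) / 2.
Let mid (t : nat) : bool := (q <= t < q + (u + v))%N.

Lemma sol_outer (t : 'I_n) : ~~ mid t -> Wact n sg (rho_g n) t = nth 0 target t.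
Proof.
have [coordX coordY] := coord t; have nE := n_split; have tn := ltn_ord t.
rewrite /mid; case: (ltnP t q) => [tq _|qt /= tm]; first by rewrite target_X // coordX.
by rewrite coordY ?target_Y ?tn //; move: tm qt nE; clear; lia.
Qed.

(* The middle coordinates of sigma rho_g have absolute values in {1, ..., u + v}:
   the larger values are taken by X and Y on the outer coordinates. *)
Lemma sol_mid_abs (t : 'I_n) : mid t -> (n - (sg.1^-1)%g t <= u + v)%N.
Proof.
move=> tm; rewrite leqNgt; apply/negP => big; have nE := n_split.
have same_abs (s : 'I_n) x : x = (n - (sg.1^-1)%g t)%N -> `|Wact n sg (rho_g n) s| = x%:R -> s = t.
  by move=> xt E; apply: norm_Wact_rho_inj; apply: (etrans E); rewrite norm_Wact_rho xt.
have : (n - (sg.1^-1)%g t)%N \in X ++ Y.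
  by rewrite mem_XY; have := ltn_ord ((sg.1^-1)%g t); move: big; clear; lia.
rewrite mem_cat => /orP[] /(nthP 0%N)[i]; rewrite size_tuple => ib xi.
  have iq : (i < n)%N by move: ib nE; clear; lia.
  have [hX _] := coord (Ordinal iq).
  have := same_abs (Ordinal iq) _ xi; rewrite hX // normr_nat => /(_ erefl) /(congr1 val) /=.
  by move: tm ib; rewrite /mid; clear; lia.
have ip : (n - 1 - i < n)%N by move: ib nE; clear; lia.
have [_ hY] := coord (Ordinal ip).
have ii : (n - 1 - (n - 1 - i) = i)%N by move: ib nE; clear; lia.
have := same_abs (Ordinal ip) _ xi; rewrite hY /= ?ii ?normrN ?normr_nat; last by move: ib nE; clear; lia.
by move=> /(_ erefl) /(congr1 val) /=; move: tm ib nE; rewrite /mid; clear; lia.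
Qed.

Lemma sol_mid_lhs (t : 'I_n) : mid t -> lhs t = Wact n sg (rho_g n) t.
Proof.
have [_ _ _ E] := sol; have nE := n_split.
rewrite /mid /lhs E shiftE_nth ?ltn_ord //; last by move: nE; clear; lia.
by move=> tm; rewrite ifF ?ifT ?addr0 //; move: tm nE; clear; lia.
Qed.

(* D t = mu (w^-1 t) - k, so that the values of D run through the pool. *)
Let D : nat -> rat := on_nat 0 (fun t : 'I_n => lhs t + (t : nat)%:R - q%:R).
Let A (j : nat) : nat := on_nat 0%N (fun t : 'I_n => n - (sg.1^-1)%g t)%N (q + j).
Let rest : seq rat := map D (iota 0 q ++ iota (q + (u + v)) p).

Lemma perm_D : perm_eq (map D (iota 0 n)) (pool (u + v) Ish Jsh (2 * k)).
Proof.
have := pool_mu IJ_gt_k; rewrite sizeI sizeJ.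
have -> : (u + 2 * k + v = n)%N by have := n_split; clear -pq2k; lia.
apply: perm_trans; rewrite /D map_on_nat.
have -> : map (fun t : 'I_n => lhs t + (t : nat)%:R - q%:R) (enum 'I_n) =
          map (fun s => mu k I J s - k%:R) (map val (map (fun t => (w^-1)%g t) (enum 'I_n))).
  by rewrite -!map_comp; apply: eq_map => t /=; rewrite /lhs wact_tau shift_const; ring.
by rewrite -val_enum_ord perm_map // perm_map // perm_map_enum.
Qed.

Lemma sol_pool_embedding : pool_embedding (u + v) Ish Jsh (2 * k) (fun j => D (q + j)) A rest.
Proof.
have nE := n_split; split.
- exact: shifted_split.
- move=> j juv; have qj : (q + j < n)%N by move: juv nE; clear; lia.
  have qjm : mid (Ordinal qj) by rewrite /mid /=; move: juv; clear; lia.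
  rewrite /D /A -[(q + j)%N]/(val (Ordinal qj)) !on_natE; split.
    have -> : lhs (Ordinal qj) + (q + j)%N%:R - q%:R - j%:R = lhs (Ordinal qj).
      by rewrite natrD; ring.
    by rewrite sol_mid_lhs // norm_Wact_rho.
  by have := sol_mid_abs qjm; have := ltn_ord ((sg.1^-1)%g (Ordinal qj)); clear; lia.
- move=> i j iuv juv; rewrite /A.
  have qi : (q + i < n)%N by move: iuv nE; clear; lia.
  have qj : (q + j < n)%N by move: juv nE; clear; lia.
  rewrite -[(q + i)%N]/(val (Ordinal qi)) -[(q + j)%N]/(val (Ordinal qj)) !on_natE.
  by move/abs_Wact_rho_inj => /(congr1 val) /=; clear; lia.
- have split_n : iota 0 n = iota 0 q ++ iota q (u + v) ++ iota (q + (u + v)) p.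
    by rewrite {1}nE iotaD iotaD add0n catA.
  have mid_map : map (fun j => D (q + j)) (iota 0 (u + v)) = map D (iota q (u + v)).
    by rewrite [RHS]map_iota_shift.
  apply: perm_trans perm_D.
  by rewrite split_n mid_map /rest !map_cat perm_catCA.
Qed.

Lemma sol_lhs_target (t : 'I_n) : lhs t = lhs_target t.
Proof.
have [fE restE] := pool_embedding_forcedP sol_pool_embedding.
have Dt : D t = lhs t + (t : nat)%:R - q%:R by rewrite /D on_natE.
rewrite /lhs_target; case: ifP => tm.
  have jb : (t - q < u + v)%N by move: tm; clear; lia.
  have qt : (q <= t)%N by case/andP: tm.
  have := fE _ jb; rewrite subnKC // Dt => E.
  rewrite -[in RHS](subnKC qt) target_mid // -E natrB //; ring.
have : D t \in rest.
  rewrite map_f // mem_cat !mem_iota; have := ltn_ord t; have := n_split.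
  by move: tm; clear; lia.
rewrite (perm_mem restE) size_Ish => /nseqP[+ _]; rewrite Dt natrD.
by move=> E; lra.
Qed.

Lemma sol_target (t : 'I_n) : Wact n sg (rho_g n) t = nth 0 target t.
Proof.
case: (boolP (mid t)) => tm; last exact: sol_outer.
by rewrite -sol_mid_lhs // sol_lhs_target /lhs_target ifT.
Qed.

Lemma sol_shift t : (t < n)%N ->
  nth 0 (shiftE n eps eta a b) t = nth 0 (shiftE n eps eta a_star b_star) t.
Proof.
move=> tn; have [_ _ _ E] := sol; have := E (Ordinal tn).
rewrite -/(lhs _) sol_lhs_target sol_target lhs_target_shift //=.
by move/addrI.
Qed.

Lemma solution_unique :
  [/\ wact n w (tau n k I J) = wact n w_star (tau n k I J), sg = sig_star, a = a_star & b = b_star].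
Proof.
have nE := n_split; have pqn : (p + q <= n)%N by move: nE; clear; lia.
have nat_eq2 c x y : ((c + 2 * x)%N%:R : rat) = (c + 2 * y)%N%:R -> x = y.
  by move/eqP; rewrite eqr_nat eqn_add2l eqn_mul2l /= => /eqP.
split.
- apply/ffunP => t; have := sol_lhs_target t; rewrite -(wact_w_star t) /lhs.
  by move/addIr/addIr.
- by apply: Wact_rho_inj => t; rewrite sol_target Wact_sig_star.
- apply: val_inj; apply: (@eq_from_nth _ 0%N); first by rewrite !size_tuple.
  move=> i; rewrite size_tuple => ip; have tn : (n - 1 - i < n)%N by move: ip nE; clear; lia.
  have := sol_shift tn; rewrite !shiftE_nth // !ifF; try (move: ip nE; clear; lia).
  have -> : (n - 1 - (n - 1 - i) = i)%N by move: ip nE; clear; lia.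
  exact: nat_eq2.
- apply: val_inj; apply: (@eq_from_nth _ 0%N); first by rewrite !size_tuple.
  move=> i; rewrite size_tuple => iq; have tn : (i < n)%N by move: iq nE; clear; lia.
  by have := sol_shift tn; rewrite !shiftE_nth // iq => /oppr_inj /nat_eq2.
Qed.

End Uniqueness.

End SpecialTau.

Local Close Scope ring_scope.

Theorem mainTheorem5 (n k p q u v eps eta : nat) (I J : seq nat)
    (X : q.-tuple nat) (Y : p.-tuple nat) :
  (1 <= n)%N -> (0 < p)%N -> (0 < q)%N -> (p + q = 2 * k)%N -> (2 * k <= n)%N ->
  (eps <= 1)%N -> (eta <= 1)%N ->
  special n k u v I J ->
  sorted gtn X -> sorted gtn Y ->
  (forall i, (i < q)%N -> (u + v + 1 <= nth 0 X i <= n)%N) ->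
  (forall j, (j < p)%N -> (u + v + 1 <= nth 0 Y j <= n)%N) ->
  (forall i j, (i < q)%N -> (j < p)%N -> nth 0 X i <> nth 0 Y j) ->
  (forall i, (1 <= i <= q)%N -> (nth 0 X (i - 1) + u + q + 1 - i) %% 2 = eta) ->
  (forall m, (1 <= m <= p)%N -> (nth 0 Y (p - m) + v + m - 1) %% 2 = eps) ->
  exists (lam : {ffun 'I_n -> rat}) (sg : signed_perm n) (a : p.-tuple nat) (b : q.-tuple nat),
    (exists w : {perm 'I_n},
        lam = wact n w (tau n k I J) /\ solE n k p q eps eta I J w sg a b /\ coordcond n p q X Y sg) /\
    (forall (w' : {perm 'I_n}) (sg' : signed_perm n) (a' : p.-tuple nat) (b' : q.-tuple nat),
        solE n k p q eps eta I J w' sg' a' b' -> coordcond n p q X Y sg' ->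
        [/\ wact n w' (tau n k I J) = lam, sg' = sg, a' = a & b' = b]).
Proof.
move=> _ _ _ pq2k k_le eps_le1 eta_le1 [sizeI sizeJ uv_eq [sortI sortJ] permIJ].
move=> sortX sortY rangeX rangeY X_Y parX parY.
pose w := w_star pq2k k_le uv_eq.
pose sg := sig_star pq2k k_le sizeI sizeJ uv_eq sortI sortJ permIJ sortX sortY rangeX rangeY X_Y.
exists (wact n w (tau n k I J)), sg, (a_star v eps Y), (b_star u eta X); split.
  exists w; split=> //.
  exact: solution_exists pq2k k_le sizeI sizeJ uv_eq sortI sortJ permIJ sortX sortY rangeX rangeY X_Y
    eps_le1 eta_le1 parX parY.
move=> w' sg' a' b' sol coord.
exact: solution_unique pq2k k_le sizeI sizeJ uv_eq sortI sortJ permIJ sortX sortY rangeX rangeY X_Y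
  eps_le1 eta_le1 parX parY w' sg' a' b' sol coord.
Qed.
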